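(* Let $X\subset\mathbb{R}$ be a Lebesgue measurable set such that (i) for all $x\in\mathbb{R}$, $x\in X$ if and only if $x+1\in X$; and (ii) for every $k\in\mathbb{Z}$ and every $x\in X$, $kx\in X$. Then either $X$ has Lebesgue measure zero or $\mathbb{R}\setminus X$ has Lebesgue measure zero. *)

From HB Require Import structures.
From mathcomp Require Import all_boot all_order all_algebra.
From mathcomp Require Import all_classical all_reals all_analysis.
Local Open Scope classical_set_scope.
Local Open Scope ring_scope.

(* Lebesgue measurability on R: membership in the Caratheodory sigma-algebra of
   the Lebesgue outer measure, i.e. the domain of the (completed) Lebesgue
   measure [completed_lebesgue_measure]. *)
Definition lebesgue_measurable {R : realType} (X : set R) : Prop :=
  @measurable _ (caratheodory_type (wlength (R:=R) idfun)^*%mu) X.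

(* Let A = X ∩ (0,1] and let λ be Lebesgue outer measure.  Since x ↦ N x - j
   maps X into X, each grid cell A ∩ (j/N, (j+1)/N] lies in the image of A
   under y ↦ (y + j)/N, so its measure is at most λ(A)/N.  Covering an interval
   I by such cells gives λ(A ∩ I) ≤ λ(A)|I|, hence λ(A ∩ E) ≤ λ(A)λ(E) for every
   E, and E = A forces λ(A) ∈ {0, 1}.  By 1-periodicity, λ(A) = 0 makes X null;
   if λ(A) = 1, measurability of X makes (0,1] \ X null, and periodicity of the
   complement makes ~X null. *)

From HB Require Import structures.
From mathcomp Require Import all_boot all_order all_algebra.
From mathcomp Require Import all_classical all_reals all_analysis.
From mathcomp Require Import ring lra zify.
Import Order.TTheory GRing.Theory Num.Theory.
Local Open Scope classical_set_scope.
Local Open Scope ring_scope.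

(* As a function on all sets, [completed_lebesgue_measure] is this outer
   measure. *)
Local Notation lambda := (wlength (R:=_) idfun)^*%mu.

Section lebesgue_outer_measure.
Context {R : realType}.
Implicit Types (A E Y : set R) (a b c : R).

Lemma wlength_itvoc a b : wlength idfun `]a, b] = (Num.max (b - a) 0)%:E.
Proof.
rewrite wlength_itv/= lte_fin -EFinD.
case: ltP => ab; first by rewrite max_l// subr_ge0 ltW.
by rewrite max_r// subr_le0.
Qed.

Lemma lebesgue_outer_itvoc a b : lambda `]a, b] = (Num.max (b - a) 0)%:E.
Proof.
by rewrite measurable_mu_extE; [exact: wlength_itvoc | exact: is_ocitv].
Qed.

Lemma lebesgue_outer_ge_cover E (M : \bar R) :
  (forall F : nat -> R * R, E `<=` \bigcup_k `](F k).1, (F k).2]%classic ->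
     (M <= \sum_(0 <= k <oo) (Num.max ((F k).2 - (F k).1) 0)%:E)%E) ->
  (M <= lambda E)%E.
Proof.
move=> ME; apply: le_ereal_inf_tmp => _ [I [ocI EI] <-].
have /choice[F FI] k : exists x : R * R, `]x.1, x.2]%classic = I k.
  by have [x _ <-] := ocI k; exists x.
rewrite (_ : I = fun k => `](F k).1, (F k).2]%classic); last exact/funext.
under eq_eseriesr do rewrite wlength_itvoc.
by apply: ME => x /EI[k _ Ix]; exists k; rewrite // FI.
Qed.

Lemma lebesgue_outer_affine_le c b A : 0 < c ->
  (lambda ((fun x => (c * x + b)%R) @` A) <= c%:E * lambda A)%E.
Proof.
move=> c0; rewrite -lee_pdivrMl//; apply: lebesgue_outer_ge_cover => F AF.
rewrite lee_pdivrMl//.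
pose G k : set R := `](c * (F k).1 + b), (c * (F k).2 + b)]%classic.
have cAG : (fun x => c * x + b) @` A `<=` \bigcup_k G k.
  move=> _ [x /AF[k _ Fx] <-]; exists k => //.
  by move: Fx; rewrite /G /= !in_itv/= ltrD2r lerD2r ltr_pM2l// ler_pM2l.
apply: le_trans (le_outer_measure lambda _ _ cAG) _.
apply: le_trans (outer_measure_sigma_subadditive lambda _) _.
rewrite -nneseriesZl; last by move=> *; rewrite lee_fin le_max lexx orbT.
apply: lee_nneseries => [k _ _|k _]; first exact: outer_measure_ge0.
rewrite /= /G lebesgue_outer_itvoc -EFinM lee_fin (maxr_pMr _ _ (ltW c0)).
by rewrite mulr0 mulrBr opprD addrACA subrr addr0.
Qed.

Lemma lebesgue_outer_null_itvoc_int Y :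
  (forall m : int, lambda (Y `&` `]m%:~R, m%:~R + 1]) = 0%E) -> lambda Y = 0%E.
Proof.
move=> Ynull; pose F k := if unpickle k is Some m
  then Y `&` `](m : int)%:~R, m%:~R + 1]%classic else set0.
have YF : Y `<=` \bigcup_k F k.
  move=> x Yx; exists (pickle (Num.ceil x - 1)); first by [].
  rewrite /F pickleK; split; first exact: Yx.
  by rewrite /= in_itv/=; have := ceil_itv x; rewrite intrB subrK.
apply/eqP; rewrite eq_le outer_measure_ge0 andbT.
apply: le_trans (le_outer_measure lambda _ _ YF) _.
apply: le_trans (outer_measure_sigma_subadditive lambda _) _.
rewrite eseries0// => k _ _; rewrite /F /=.
by case: unpickle => [m|]; [exact: Ynull | exact: outer_measure0].
Qed.

Lemma lebesgue_outer_setI_itvoc_le Y a b :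
  (lambda (Y `&` `]a, b]) <= (Num.max (b - a) 0)%:E)%E.
Proof.
rewrite -lebesgue_outer_itvoc.
exact: (le_outer_measure lambda _ _ (@subIsetr _ Y _)).
Qed.

End lebesgue_outer_measure.

Lemma caratheodory_compl_null (T : Type) (R : realType)
    (mu : {outer_measure set T -> \bar R}) (M I : set T) :
  mu.-caratheodory M -> mu I \is a fin_num -> mu (M `&` I) = mu I ->
  mu (~` M `&` I) = 0%E.
Proof.
move=> /(_ I) muM muI MI; rewrite setIC; rewrite setIC MI in muM.
by rewrite -[LHS](addeK _ muI) (addeC (mu _)) -muM subee.
Qed.

Section one_periodic.
Context {R : realType} {Y : set R}.
Hypothesis Yper : forall x, Y x <-> Y (x + 1).

Lemma periodic_shiftn (n : nat) x : Y x <-> Y (x + n%:R).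
Proof.
by elim: n x => [|n IHn] x; rewrite ?addr0// -natr1 addrA -Yper -IHn.
Qed.

Lemma periodic_shiftz (m : int) x : Y x <-> Y (x + m%:~R).
Proof.
case: m => n; first exact: periodic_shiftn.
by rewrite (periodic_shiftn n.+1 (x + _)) NegzE mulrNz -addrA addNr addr0.
Qed.

Lemma periodic_setC x : (~` Y) x <-> (~` Y) (x + 1).
Proof. by rewrite /setC/= Yper. Qed.

Lemma periodic_lebesgue_outer_null :
  lambda (Y `&` `]0, 1]) = 0%E -> lambda Y = 0%E.
Proof.
move=> Y01; apply: lebesgue_outer_null_itvoc_int => m.
have Ym : Y `&` `]m%:~R, m%:~R + 1] `<=`
    (fun x => (1 * x + m%:~R)%R) @` (Y `&` `]0, 1]).
  move=> x [Yx]; rewrite /= in_itv/= => /andP[mx xm].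
  exists (x - m%:~R); last by rewrite mul1r subrK.
  split; first by rewrite (periodic_shiftz m) subrK.
  by rewrite /= in_itv/= subr_gt0 mx lerBlDl.
apply/eqP; rewrite eq_le outer_measure_ge0 andbT.
have := lebesgue_outer_affine_le 1 m%:~R (Y `&` `]0, 1]) ltr01.
rewrite Y01 mule0; apply: le_trans; exact: le_outer_measure.
Qed.

End one_periodic.

Section integer_invariant.
Context {R : realType} {X : set R}.
Hypothesis Xshift : forall x, X x <-> X (x + 1).
Hypothesis Xmul : forall (k : int) x, X x -> X (k%:~R * x).
Let A := X `&` `]0, 1].

Let A_fin_num : lambda A \is a fin_num.
Proof.
rewrite ge0_fin_numE ?outer_measure_ge0//.
exact: le_lt_trans (lebesgue_outer_setI_itvoc_le _ _ _) (ltry _).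
Qed.

Lemma invariant_cell_le (N : nat) (j : int) : (0 < N)%N ->
  (lambda (A `&` `](j%:~R / N%:R)%R, ((j + 1)%:~R / N%:R)%R]) <=
   (N%:R^-1)%:E * lambda A)%E.
Proof.
move=> N0; have N0' : 0 < N%:R :> R by rewrite ltr0n.
have cellA : A `&` `]j%:~R / N%:R, (j + 1)%:~R / N%:R] `<=`
    (fun y => (N%:R^-1 * y + j%:~R / N%:R)%R) @` A.
  move=> x [[Xx _]]; rewrite /= in_itv/= ltr_pdivrMr// ler_pdivlMr//.
  rewrite intrD => /andP[jx xj].
  exists (x * N%:R - j%:~R); last by field; rewrite gt_eqF.
  split; last by rewrite /= in_itv/= subr_gt0 jx lerBlDl.
  by rewrite (periodic_shiftz Xshift j) subrK mulrC; exact: (Xmul N).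
apply: le_trans (le_outer_measure lambda _ _ cellA) _ => /=.
by apply: lebesgue_outer_affine_le; rewrite invr_gt0.
Qed.

Lemma invariant_itvoc_le_approx (s t : R) (N : nat) : s < t -> (0 < N)%N ->
  (lambda (A `&` `]s, t]) <= lambda A * (t - s + 2 / N%:R)%:E)%E.
Proof.
move=> st N0; have N0' : 0 < N%:R :> R by rewrite ltr0n.
set p := Num.ceil (s * N%:R); set q := Num.ceil (t * N%:R).
have pq : p <= q by apply: le_ceil; rewrite ler_pM2r// ltW.
pose M := `|(q - p + 1)%R|%N.
have intM : M%:R = (q - p + 1)%:~R :> R by rewrite pmulrn gez0_abs//; lia.
(* The cells (j/N, (j+1)/N] with p <= j + 1 <= q cover (s, t]; there are at
   most (t - s) N + 2 of them. *)
pose cell (i : nat) := let j := p - 1 + i%:Z in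
  A `&` `](j%:~R / N%:R)%R, ((j + 1)%:~R / N%:R)%R].
have cover : A `&` `]s, t] `<=` \big[setU/set0]_(i < M) cell i.
  move=> x [Ax]; rewrite /= in_itv/= => /andP[sx xt].
  rewrite -bigcup_mkord; set c := Num.ceil (x * N%:R).
  have pc : p <= c by apply: le_ceil; rewrite ler_pM2r// ltW.
  have cq : c <= q by apply: le_ceil; rewrite ler_pM2r.
  exists `|(c - p)%R|%N; first by rewrite /=; lia.
  split; first exact: Ax.
  have -> : p - 1 + `|(c - p)%R|%N = c - 1 by rewrite gez0_abs; lia.
  by rewrite subrK /= in_itv/= ltr_pdivrMr// ler_pdivlMr// ceil_itv.
apply: le_trans (le_outer_measure lambda _ _ cover) _ => /=.
apply: le_trans (outer_measure_subadditive lambda cell M) _.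
apply: (@le_trans _ _ (\sum_(i < M) (N%:R^-1 * fine (lambda A))%:E)%E).
  by apply: lee_sum => i _; rewrite EFinM fineK//; exact: invariant_cell_le.
rewrite -[in leRHS](fineK A_fin_num) -EFinM sumEFin sumr_const card_ord lee_fin.
rewrite -[_ *+ M]mulr_natr intM -mulrA mulrCA.
rewrite ler_wpM2l ?fine_ge0 ?outer_measure_ge0//.
have cells_le : (q - p + 1)%:~R <= (t - s) * N%:R + 2 :> R.
  have := ceil_itv (t * N%:R); have := ceil_ge (s * N%:R).
  by rewrite !intrD; lra.
have -> : t - s + 2 / N%:R = N%:R^-1 * ((t - s) * N%:R + 2).
  by field; rewrite gt_eqF.
by rewrite ler_wpM2l// invr_ge0 ler0n.
Qed.

Lemma invariant_itvoc_le (s t : R) :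
  (lambda (A `&` `]s, t]) <= lambda A * (Num.max (t - s) 0)%:E)%E.
Proof.
have [ts|st] := leP t s.
  rewrite set_itv_ge ?bnd_simp -?leNgt// setI0 outer_measure0.
  by rewrite mule_ge0 ?outer_measure_ge0// lee_fin le_max lexx orbT.
rewrite max_l; last by rewrite subr_ge0 ltW.
apply/lee_addgt0Pr => e e0.
pose N := (Num.truncn (fine (lambda A) * 2 / e)).+1.
apply: le_trans (invariant_itvoc_le_approx _ _ N st (ltn0Sn _)) _.
rewrite -(fineK A_fin_num) -!EFinM -EFinD lee_fin mulrDr lerD2l mulrA.
rewrite ltW// ltr_pdivrMr ?ltr0n// -ltr_pdivrMl// mulrC.
exact: truncnS_gt.
Qed.

Lemma invariant_density_le (E : set R) :
  (lambda (A `&` E) <= lambda A * lambda E)%E.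
Proof.
have := outer_measure_ge0 lambda A; rewrite le_eqVlt => /orP[/eqP A0|A_gt0].
  rewrite -A0 mul0e A0.
  exact: (le_outer_measure lambda _ _ (@subIsetl _ A E)).
have a_gt0 : 0 < fine (lambda A) by rewrite -lte_fin fineK.
rewrite -[in leRHS](fineK A_fin_num) -lee_pdivrMl//.
apply: lebesgue_outer_ge_cover => F EF.
rewrite lee_pdivrMl//.
have AEF : A `&` E `<=` \bigcup_k (A `&` `](F k).1, (F k).2]).
  by move=> x [Ax /EF[k _ Fx]]; exists k.
apply: le_trans (le_outer_measure lambda _ _ AEF) _.
apply: le_trans (outer_measure_sigma_subadditive lambda _) _.
rewrite -nneseriesZl; last by move=> *; rewrite lee_fin le_max lexx orbT.
apply: lee_nneseries => [k _ _|k _]; first exact: outer_measure_ge0.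
by rewrite fineK//; exact: invariant_itvoc_le.
Qed.

Lemma invariant_unit_part_0_or_1 : lambda A = 0%E \/ lambda A = 1%E.
Proof.
rewrite -(fineK A_fin_num); set a := fine (lambda A).
have a_le1 : a <= 1.
  rewrite -lee_fin fineK//.
  by have := lebesgue_outer_setI_itvoc_le X 0 1; rewrite subr0 max_l.
have a_le_sqr : a <= a * a.
  rewrite -lee_fin EFinM fineK//.
  by have := invariant_density_le A; rewrite setIid.
have [->|a_neq0] := eqVneq a 0; [by left | right].
have a_gt0 : 0 < a by rewrite lt_def a_neq0 fine_ge0 ?outer_measure_ge0.
by congr EFin; apply/eqP; rewrite eq_le a_le1 -(ler_pM2l a_gt0) mulr1.
Qed.

End integer_invariant.

Theorem lemma2 (R : realType) (X : set R)
  (mX : lebesgue_measurable X)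
  (h1 : forall x : R, X x <-> X (x + 1))
  (h2 : forall (k : int) (x : R), X x -> X (k%:~R * x)) :
  (completed_lebesgue_measure X = 0%E) \/
  (completed_lebesgue_measure (~` X) = 0%E).
Proof.
change (lambda X = 0 \/ lambda (~` X) = 0)%E.
have [A0|A1] := invariant_unit_part_0_or_1 h1 h2.
  by left; exact: periodic_lebesgue_outer_null.
right; apply: (periodic_lebesgue_outer_null (periodic_setC h1)).
apply: caratheodory_compl_null mX _ _.
  by rewrite /= lebesgue_outer_itvoc.
by rewrite /= A1 lebesgue_outer_itvoc subr0 max_l.
Qed.
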